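(* Let $\mathcal{C}$ be either $\mathbf{Sets}$ or $\mathbf{Vec}$ and let $M,N:\mathbf{R}^d\to\mathcal{C}$ be surjective persistence modules. Then \[d_{\mathrm{I},2d}(\mathrm{rk}(M),\mathrm{rk}(N))\le d_{\mathrm{I},d}(\mathrm{dm}(M),\mathrm{dm}(N)).\]
   Context: $\mathbf{R}^d$ has the product order and $\vec\varepsilon=\varepsilon(1,\dots,1)$. A persistence module $M:\mathbf{R}^d\to\mathcal{C}$ consists of objects $M_\mathbf{a}$ (finite sets or finite-dimensional vector spaces) and morphisms $\varphi_M(\mathbf{a},\mathbf{b}):M_\mathbf{a}\to M_\mathbf{b}$ for $\mathbf{a}\le\mathbf{b}$, functorially; it is surjective if every $\varphi_M(\mathbf{a},\mathbf{b})$ is surjective. The dimension function $\mathrm{dm}(M):\mathbf{R}^d\to\mathbf{Z}_+$ sends $\mathbf{a}$ to the cardinality (for $\mathbf{Sets}$) or dimension (for $\mathbf{Vec}$) of $M_\mathbf{a}$. The rank invariant $\mathrm{rk}(M):\mathbf{R}^d\times\mathbf{R}^d\to\mathbf{Z}_+\cup\{\infty\}$ is $\mathrm{rk}(M)(\mathbf{a},\mathbf{b})=$ rank of $\varphi_M(\mathbf{a},\mathbf{b})$ (for $\mathbf{Sets}$, the cardinality of its image) if $\mathbf{a}\le\mathbf{b}$, and $\infty$ otherwise. For $F,G:\mathbf{R}^d\to\mathbf{Z}_+$, $d_{\mathrm{I},d}(F,G):=\inf\{\varepsilon\ge0:\forall\mathbf{a},\ F(\mathbf{a})\ge G(\mathbf{a}+\vec\varepsilon),\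 G(\mathbf{a})\ge F(\mathbf{a}+\vec\varepsilon)\}$. For $F,G:\mathbf{R}^d\times\mathbf{R}^d\to\mathbf{Z}_+\cup\{\infty\}$, $d_{\mathrm{I},2d}(F,G):=\inf\{\varepsilon\ge0:\forall(\mathbf{a},\mathbf{b}),\ F(\mathbf{a},\mathbf{b})\ge G(\mathbf{a}-\vec\varepsilon,\mathbf{b}+\vec\varepsilon),\ G(\mathbf{a},\mathbf{b})\ge F(\mathbf{a}-\vec\varepsilon,\mathbf{b}+\vec\varepsilon)\}$. *)

From HB Require Import structures.
From mathcomp Require Import all_boot all_order all_algebra.
From mathcomp Require Import all_classical all_reals.
From mathcomp Require Import ereal.
Unset Printing Implicit Defensive.
Import Order.TTheory GRing.Theory Num.Theory.
Local Open Scope ring_scope.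

Section Defs.
Variables (R : realType) (d : nat).

Definition pt := 'I_d -> R.
Definition ple (a b : pt) : Prop := forall i, a i <= b i.
Definition padd (a : pt) (e : R) : pt := fun i => a i + e.
Definition psub (a : pt) (e : R) : pt := fun i => a i - e.

(* Persistence module R^d -> Sets (finite sets).  The morphism field is total,
   but only its values on comparable pairs a <= b are meaningful. *)
Record SetPMod := {
  sobj : pt -> finType;
  smor : forall a b : pt, sobj a -> sobj b;
  smor_id : forall a (x : sobj a), smor a a x = x;
  smor_comp : forall a b c, ple a b -> ple b c ->
     forall x : sobj a, smor a c x = smor b c (smor a b x) }.

Definition set_surjective (M : SetPMod) : Prop :=
  forall a b, ple a b -> forall y : sobj M b, exists x : sobj M a, smor M a b x = y.

Definition set_dm (M : SetPMod) (a : pt) : nat := #|sobj M a|.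

Definition set_rk (M : SetPMod) (a b : pt) : \bar R :=
  if `[< ple a b >] then ((#|(smor M a b @: [set: sobj M a])%SET|)%:R)%:E
  else +oo%E.

Record VecPMod (K : fieldType) := {
  vobj : pt -> vectType K;
  vmor : forall a b : pt, 'Hom(vobj a, vobj b);
  vmor_id : forall a, vmor a a = \1%VF;
  vmor_comp : forall a b c, ple a b -> ple b c ->
     vmor a c = (vmor b c \o vmor a b)%VF }.

Definition vec_surjective (K : fieldType) (M : VecPMod K) : Prop :=
  forall a b, ple a b -> limg (vmor K M a b) = fullv.

Definition vec_dm (K : fieldType) (M : VecPMod K) (a : pt) : nat :=
  \dim (fullv : {vspace vobj K M a}).

Definition vec_rk (K : fieldType) (M : VecPMod K) (a b : pt) : \bar R :=
  if `[< ple a b >] then ((\dim (limg (vmor K M a b)))%:R)%:E else +oo%E.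

Local Open Scope classical_set_scope.
Definition dI_d (F G : pt -> nat) : \bar R :=
  ereal_inf [set e%:E | e in [set e : R | 0 <= e /\
     forall a : pt, (G (padd a e) <= F a)%N /\ (F (padd a e) <= G a)%N]].

Definition dI_2d (F G : pt -> pt -> \bar R) : \bar R :=
  ereal_inf [set e%:E | e in [set e : R | 0 <= e /\
     forall a b : pt, (G (psub a e) (padd b e) <= F a b)%E /\
                      (F (psub a e) (padd b e) <= G a b)%E]].

End Defs.

Arguments set_surjective {R d}.
Arguments set_dm {R d}.
Arguments set_rk {R d}.
Arguments vec_surjective {R d K}.
Arguments vec_dm {R d K}.
Arguments vec_rk {R d K}.
Arguments dI_d {R d}.
Arguments dI_2d {R d}.

From HB Require Import structures.
From mathcomp Require Import all_boot all_order all_algebra.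
From mathcomp Require Import all_classical all_reals.
From mathcomp Require Import ereal.
From mathcomp Require Import lra.
Import Order.TTheory GRing.Theory Num.Theory.
Local Open Scope ring_scope.

(* For a surjective module every structure map a <= b is onto M_b, so
   rk(M)(a, b) = dm(M)(b) on comparable pairs.  An e-interleaving of the
   dimension functions is then an e-interleaving of the rank invariants: the
   shifted pair (a - e, b + e) is still comparable and its rank only sees
   the shifted endpoint b + e. *)

Section RankOfDimension.
Context {R : realType} {d : nat}.

Definition rank_of_dim (f : pt R d -> nat) (a b : pt R d) : \bar R :=
  if `[< ple R d a b >] then ((f b)%:R)%:E else +oo%E.

Lemma ple_psub_padd (a b : pt R d) (e : R) :
  0 <= e -> ple R d a b -> ple R d (psub R d a e) (padd R d b e).
Proof. by move=> e_ge0 le_ab i; rewrite /psub /padd; have := le_ab i; lra. Qed.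

Lemma dI_2d_rank_of_dim_le (f g : pt R d -> nat) :
  (dI_2d (rank_of_dim f) (rank_of_dim g) <= dI_d f g)%E.
Proof.
apply: ereal_inf_le_tmp => _ [e [e_ge0 interleaved] <-].
exists e => //; split=> // a b; rewrite /rank_of_dim.
have [le_ab|_] := asboolP (ple R d a b); last by rewrite !leey.
rewrite asboolT; last exact: ple_psub_padd.
by rewrite !lee_fin !ler_nat; case: (interleaved b).
Qed.

Lemma set_rk_surjective (M : SetPMod R d) :
  set_surjective M -> set_rk M = rank_of_dim (set_dm M).
Proof.
move=> surjM; apply/funext => a; apply/funext => b.
rewrite /set_rk /rank_of_dim /set_dm.
have [le_ab|//] := asboolP (ple R d a b).
suff -> : (smor R d M a b @: [set: _])%SET = [set: _] by rewrite cardsT.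
apply/setP => y; rewrite !inE.
by have [x <-] := surjM a b le_ab y; rewrite imset_f ?inE.
Qed.

Lemma vec_rk_surjective {K : fieldType} (M : VecPMod R d K) :
  vec_surjective M -> vec_rk M = rank_of_dim (vec_dm M).
Proof.
move=> surjM; apply/funext => a; apply/funext => b.
rewrite /vec_rk /rank_of_dim /vec_dm.
by have [le_ab|//] := asboolP (ple R d a b); rewrite surjM.
Qed.

End RankOfDimension.

Theorem proposition6p10 (R : realType) (d : nat) :
  (forall M N : SetPMod R d, set_surjective M -> set_surjective N ->
     (dI_2d (set_rk M) (set_rk N) <= dI_d (set_dm M) (set_dm N))%E)
  /\
  (forall (K : fieldType) (M N : VecPMod R d K),
     vec_surjective M -> vec_surjective N ->
     (dI_2d (vec_rk M) (vec_rk N) <= dI_d (vec_dm M) (vec_dm N))%E).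
Proof.
split.
- move=> M N surjM surjN.
  rewrite (set_rk_surjective _ surjM) (set_rk_surjective _ surjN).
  exact: dI_2d_rank_of_dim_le.
- move=> K M N surjM surjN.
  rewrite (vec_rk_surjective _ surjM) (vec_rk_surjective _ surjN).
  exact: dI_2d_rank_of_dim_le.
Qed.
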